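(* Let $X,Y$ be Banach spaces and $N$ a positively octahedral absolute normalized norm on $\mathbb R^2$, and let $a,b\ge0$ be such that $N(a,b)=1$ and $N((a,b)+(0,1))=N((a,b)+(1,0))=2$. If $x\in S_X$ and $y\in S_Y$ are super Daugavet points, then $(ax,by)$ is a super Daugavet point of $X\oplus_NY$.
   Context: A norm $N$ on $\mathbb R^2$ is absolute if $N(a,b)=N(|a|,|b|)$ and normalized if $N(1,0)=N(0,1)=1$; it is positively octahedral if there exist $a,b\ge0$ with $N(a,b)=1$ and $N((a,b)+(0,1))=N((a,b)+(1,0))=2$. $X\oplus_NY$ is $X\times Y$ with norm $\|(x,y)\|=N(\|x\|,\|y\|)$. An element $x\in S_X$ is a super Daugavet point if $\sup_{z\in V}\|x-z\|=2$ for every non-empty relatively weakly open subset $V$ of $B_X$. *)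

From mathcomp Require Import all_boot all_order all_algebra.
From mathcomp Require Import all_classical all_reals all_analysis.
Set Implicit Arguments. Unset Strict Implicit. Unset Printing Implicit Defensive.
Import Order.TTheory GRing.Theory Num.Theory.
Local Open Scope ring_scope.
Local Open Scope classical_set_scope.

Definition is_norm_R2 {R : realType} (N : R -> R -> R) : Prop :=
  [/\ (forall s t, N s t = 0 -> s = 0 /\ t = 0),
      (forall c s t, N (c * s) (c * t) = `|c| * N s t) &
      (forall s t u v, N (s + u) (t + v) <= N s t + N u v)].

Definition absolute_norm {R : realType} (N : R -> R -> R) : Prop :=
  is_norm_R2 N /\ forall s t, N s t = N `|s| `|t|.

Definition normalized_norm {R : realType} (N : R -> R -> R) : Prop :=
  N 1 0 = 1 /\ N 0 1 = 1.

Definition positively_octahedral {R : realType} (N : R -> R -> R) : Prop :=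
  exists s t : R, [/\ 0 <= s, 0 <= t, N s t = 1,
                      N s (t + 1) = 2 & N (s + 1) t = 2].

Section GenericNormedSpace.
Context {R : realType} {V : lmodType R}.
Variable nrm : V -> R.

Definition linear_functional (f : V -> R) : Prop :=
  forall (c : R) (u v : V), f (c *: u + v) = c * f u + f v.

Definition dual_elt (f : V -> R) : Prop :=
  linear_functional f /\ exists C : R, forall v, `|f v| <= C * nrm v.

Definition unit_ball : set V := [set v | nrm v <= 1].
Definition unit_sphere : set V := [set v | nrm v = 1].

Definition rel_weakly_open (W : set V) : Prop :=
  W `<=` unit_ball /\
  forall x, W x -> exists (n : nat) (fs : 'I_n -> V -> R) (e : R),
    [/\ 0 < e, (forall i, dual_elt (fs i)) &
        [set z | unit_ball z /\ forall i, `|fs i (z - x)| < e] `<=` W].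

Definition super_daugavet (x : V) : Prop :=
  unit_sphere x /\
  forall W : set V, rel_weakly_open W -> W !=set0 ->
    sup [set nrm (x - z) | z in W] = 2.
End GenericNormedSpace.

Definition sum_norm {R : realType} {X Y : normedModType R}
  (N : R -> R -> R) (p : (X * Y)%type) : R := N `|p.1| `|p.2|.

From mathcomp Require Import all_boot all_order all_algebra.
From mathcomp Require Import all_classical all_reals all_analysis.
From mathcomp Require Import ring lra.
Import Order.TTheory GRing.Theory Num.Theory.
Local Open Scope ring_scope.
Local Open Scope classical_set_scope.

(* The point (a x, b y) has norm
   N a b = 1, and its distance to any point of the unit ball is at most 2.  For
   the lower bound, take a relatively weakly open W in the unit ball and
   (u, v) in W.  A purely two-dimensional fact (N_target) gives (s, t) in B_N
   dominating (|u|, |v|) with N (a + s) (b + t) = 2; it rests on N being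
   additive on the cones spanned by (a, b) and (1, 0), resp. (0, 1).  Using
   the super Daugavet property of x on a rescaled slice we find z1 with
   |z1| <= s, weakly close to u, and |a x - z1| close to a + s; similarly z2
   for y.  Then (z1, z2) lies in W and its distance to (a x, b y) is close to
   N (a + s) (b + t) = 2.  The file develops, in order: absolute norms on R^2,
   the rescaled-slice argument in a single normed space, the direct sum
   estimates, and finally the theorem. *)

Section AbsoluteNormsOnR2.
Context {R : realType} {N : R -> R -> R} (N_abs : absolute_norm N).

Lemma N_triangle s t u v : N (s + u) (t + v) <= N s t + N u v.
Proof. by case: N_abs => -[]. Qed.

Lemma N_homogeneous c s t : N (c * s) (c * t) = `|c| * N s t.
Proof. by case: N_abs => -[]. Qed.

Lemma N_absolute s t : N s t = N `|s| `|t|.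
Proof. by case: N_abs. Qed.

(* An absolute norm is nondecreasing in its first argument on [0, +oo):
   s1 is a convex combination of s2 and -s2, and N (-s2) t = N s2 t. *)
Lemma N_mono_l s1 s2 t : 0 <= s1 -> s1 <= s2 -> N s1 t <= N s2 t.
Proof.
move=> s1_ge0 s12.
have [s2_eq0|s2_neq0] := eqVneq s2 0.
  rewrite s2_eq0 in s12 *.
  by rewrite (_ : s1 = 0) //; apply/eqP; rewrite eq_le s12 s1_ge0.
have s2_gt0 : 0 < s2 by rewrite lt_neqAle eq_sym s2_neq0 (le_trans s1_ge0).
set l := (s2 + s1) / (2 * s2).
have l_ge0 : 0 <= l by rewrite divr_ge0 // ?mulr_ge0 //; lra.
have l_le1 : l <= 1 by rewrite ler_pdivrMr ?mulr_gt0 //; lra.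
have -> : s1 = l * s2 + (1 - l) * (- s2) by rewrite /l; field; lra.
have {1}-> : t = l * t + (1 - l) * t by ring.
apply: le_trans (N_triangle _ _ _ _) _.
rewrite !N_homogeneous (ger0_norm l_ge0) ger0_norm; last by lra.
by rewrite [N (- s2) t]N_absolute normrN -N_absolute -mulrDl (addrC l) subrK mul1r.
Qed.

Context (N_normalized : normalized_norm N).

Lemma N_axis_l c : N c 0 = `|c|.
Proof. by have := N_homogeneous c 1 0; rewrite mulr1 mulr0 N_normalized.1 mulr1. Qed.

Lemma N_axis_r c : N 0 c = `|c|.
Proof. by have := N_homogeneous c 0 1; rewrite mulr1 mulr0 N_normalized.2 mulr1. Qed.

Lemma N_lipschitz s t u v : N s t <= N u v + `|s - u| + `|t - v|.
Proof.
have -> : N s t = N (u + (s - u)) (v + (t - v)) by rewrite (addrC u) (addrC v) !subrK.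
apply: le_trans (N_triangle _ _ _ _) _; rewrite -addrA lerD2l.
by rewrite -[s - u]addr0 -[t - v]add0r; apply: le_trans (N_triangle _ _ _ _) _;
  rewrite N_axis_l N_axis_r addr0 add0r.
Qed.

Context (a b : R) (a_ge0 : 0 <= a) (b_ge0 : 0 <= b).
Context (N_ab : N a b = 1) (N_a1b : N (a + 1) b = 2).

Lemma N_cone mu nu : 0 <= mu -> 0 <= nu -> N (mu * a + nu) (mu * b) = mu + nu.
Proof.
move=> mu_ge0 nu_ge0; apply/eqP; rewrite eq_le; apply/andP; split.
  rewrite -[mu * b]addr0; apply: le_trans (N_triangle _ _ _ _) _.
  by rewrite N_homogeneous N_ab N_axis_l !ger0_norm // mulr1.
have [nu_le|mu_lt] := leP nu mu.
  have := N_triangle (mu * a + nu) (mu * b) (mu - nu) 0.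
  have -> : mu * a + nu + (mu - nu) = mu * (a + 1) by ring.
  rewrite addr0 N_homogeneous N_a1b N_axis_l !ger0_norm; lra.
have := N_triangle (mu * a + nu) (mu * b) ((nu - mu) * a) ((nu - mu) * b).
have -> : mu * a + nu + (nu - mu) * a = nu * (a + 1) by ring.
have -> : mu * b + (nu - mu) * b = nu * b by ring.
rewrite !N_homogeneous N_a1b N_ab !ger0_norm //; lra.
Qed.

(* Target step, below the ray through (a, b): write (s, t) = al (a, b) + be (1, 0)
   with al, be >= 0 (so al + be <= 1 by the cone identity) and raise the
   (1, 0)-component to 1 - al.  The resulting point is still in B_N and moves
   (a, b) by a further unit along the cone, so its sum with (a, b) has norm 2. *)
Lemma N_target_below s t : 0 <= s -> 0 <= t -> N s t <= 1 -> t * a <= s * b ->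
  exists s' t', [/\ s <= s', t <= t', N s' t' <= 1 & 2 <= N (a + s') (b + t')].
Proof.
move=> s_ge0 t_ge0 Nst below.
set al := t / b.
have al_ge0 : 0 <= al by rewrite divr_ge0.
have [t_eq be_ge0] : t = al * b /\ 0 <= s - al * a.
  have [b_eq0|b_neq0] := eqVneq b 0.
    move: N_ab below; rewrite /al b_eq0 N_axis_l ger0_norm // => ->.
    rewrite mulr0 mulr1 => t_le0.
    have -> : t = 0 by apply/eqP; rewrite eq_le t_le0 t_ge0.
    by rewrite !mul0r subr0.
  have b_gt0 : 0 < b by rewrite lt_neqAle eq_sym b_neq0.
  split; first by rewrite /al divfK.
  rewrite subr_ge0 /al mulrAC ler_pdivrMr //; lra.
set be := s - al * a.
have s_eq : s = al * a + be by rewrite /be addrC subrK.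
have al_be_le1 : al + be <= 1 by rewrite -(N_cone al be al_ge0 be_ge0) -t_eq -s_eq.
exists (al * a + (1 - al)), (al * b); split.
- rewrite {1}s_eq; lra.
- by rewrite t_eq.
- by rewrite N_cone; lra.
- have -> : a + (al * a + (1 - al)) = (1 + al) * a + (1 - al) by ring.
  have -> : b + al * b = (1 + al) * b by ring.
  rewrite N_cone; lra.
Qed.

End AbsoluteNormsOnR2.

(* The norm with its two arguments exchanged; it transfers statements about
   the first coordinate to the second one. *)
Definition swap_args {R : realType} (N : R -> R -> R) : R -> R -> R :=
  fun s t => N t s.

Lemma absolute_norm_swap {R : realType} {N : R -> R -> R} :
  absolute_norm N -> absolute_norm (swap_args N).
Proof.
case=> -[def hom tri] abs; split; first split.
- by move=> s t /def [-> ->].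
- by move=> c s t; apply: hom.
- by move=> s t u v; apply: tri.
- by move=> s t; apply: abs.
Qed.

Lemma normalized_norm_swap {R : realType} {N : R -> R -> R} :
  normalized_norm N -> normalized_norm (swap_args N).
Proof. by case. Qed.

Lemma N_mono {R : realType} {N : R -> R -> R} {s1 s2 t1 t2 : R} :
  absolute_norm N -> 0 <= s1 -> s1 <= s2 -> 0 <= t1 -> t1 <= t2 ->
  N s1 t1 <= N s2 t2.
Proof.
move=> N_abs s1_ge0 s12 t1_ge0 t12.
apply: le_trans (N_mono_l N_abs _ _ t1 s1_ge0 s12) _.
exact: (N_mono_l (absolute_norm_swap N_abs) t1 t2 s2 t1_ge0 t12).
Qed.

Lemma N_coord_le {R : realType} {N : R -> R -> R} {s t : R} :
  absolute_norm N -> normalized_norm N -> 0 <= s -> 0 <= t ->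
  s <= N s t /\ t <= N s t.
Proof.
move=> N_abs N_nrm s_ge0 t_ge0; split.
  by rewrite -{1}(ger0_norm s_ge0) -(N_axis_l N_abs N_nrm) N_mono.
by rewrite -{1}(ger0_norm t_ge0) -(N_axis_r N_abs N_nrm) N_mono.
Qed.

(* The two-dimensional heart of the theorem: every point of the positive part
   of B_N is dominated by a point (s', t') of B_N with N (a + s') (b + t') >= 2.
   Above the ray through (a, b) use the symmetric argument with (0, 1). *)
Lemma N_target {R : realType} {N : R -> R -> R} {a b s t : R} :
  absolute_norm N -> normalized_norm N -> 0 <= a -> 0 <= b -> N a b = 1 ->
  N (a + 1) b = 2 -> N a (b + 1) = 2 -> 0 <= s -> 0 <= t -> N s t <= 1 ->
  exists s' t', [/\ s <= s', t <= t', N s' t' <= 1 & 2 <= N (a + s') (b + t')].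
Proof.
move=> N_abs N_nrm a_ge0 b_ge0 N_ab N_a1b N_ab1 s_ge0 t_ge0 Nst.
have [below|above] := leP (t * a) (s * b).
  exact: (N_target_below N_abs N_nrm _ _ a_ge0 b_ge0 N_ab N_a1b).
have [t' [s' [? ? ? ?]]] := N_target_below (absolute_norm_swap N_abs)
  (normalized_norm_swap N_nrm) _ _ b_ge0 a_ge0 N_ab N_ab1 _ _ t_ge0 s_ge0 Nst (ltW above).
by exists s', t'.
Qed.

Lemma linear_functional0 {R : realType} {V : lmodType R} (g : V -> R) :
  linear_functional g -> g 0 = 0.
Proof. by move=> g_lin; have := g_lin 1 0 0; rewrite scaler0 addr0 mul1r; lra. Qed.

Section SuperDaugavetPoints.
Context {R : realType} {X : normedModType R}.
Local Notation normX := (fun v : X => `|v|).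

Lemma dist_scaled_unit_le {c : R} {p : X} (q : X) :
  0 <= c -> `|p| = 1 -> `|c *: p - q| <= c + `|q|.
Proof.
move=> c_ge0 p_eq1; apply: le_trans (ler_normB _ _) _.
by rewrite normrZ p_eq1 mulr1 ger0_norm.
Qed.

Lemma dist_scaled_le {x w : X} {l m : R} :
  `|x| <= 1 -> `|w| <= 1 -> l <= 1 -> m <= 1 ->
  `|x - w| <= (1 - l) + (1 - m) + `|l *: x - m *: w|.
Proof.
move=> x_le1 w_le1 l_le1 m_le1.
have shrink (c : R) (v : X) : c <= 1 -> `|v| <= 1 -> `|v - c *: v| <= 1 - c.
  move=> c_le1 v_le1; rewrite -{1}[v]scale1r -scalerBl normrZ ger0_norm ?subr_ge0 //.
  by rewrite -[leRHS]mulr1 ler_wpM2l ?subr_ge0.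
have := ler_distD (l *: x) x w; have := ler_distD (m *: w) (l *: x) w.
have := shrink l x l_le1 x_le1; rewrite distrC (distrC (m *: w)).
have := shrink m w m_le1 w_le1; lra.
Qed.

Lemma rescale_into_ball {u : X} {sp : R} :
  `|u| <= sp -> `|sp^-1 *: u| <= 1 /\ sp *: (sp^-1 *: u) = u.
Proof.
move=> u_le; have [sp_eq0|sp_neq0] := eqVneq sp 0.
  have -> : u = 0 by apply/normr0_eq0/eqP; rewrite eq_le normr_ge0 andbT -sp_eq0.
  by rewrite !scaler0 normr0.
have sp_gt0 : 0 < sp by rewrite lt_neqAle eq_sym sp_neq0 (le_trans _ u_le).
split; last by rewrite scalerA mulfV // scale1r.
rewrite normrZ ger0_norm ?invr_ge0 ?(ltW sp_gt0) //.
by rewrite ler_pdivrMl // mulr1.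
Qed.

(* The slice {w in B_X : |g_i (sp w - u)| < e} cut by finitely many dual
   functionals is relatively weakly open: around each of its points it contains
   the basic weak neighbourhood given by the functionals sp * g_i. *)
Lemma slice_rel_weakly_open {n} {g : 'I_n -> X -> R} (u : X) {sp e : R} :
  0 <= sp -> 0 < e -> (forall i, dual_elt normX (g i)) ->
  rel_weakly_open normX [set w | `|w| <= 1 /\ forall i, `|g i (sp *: w - u)| < e].
Proof.
move=> sp_ge0 e_gt0 g_dual.
have g_lin i c p q : g i (c *: p + q) = c * g i p + g i q by case: (g_dual i).
split=> [w []//|w0 [w0_le1 w0_slice]].
pose M := \big[Num.max/0]_(i < n) `|g i (sp *: w0 - u)|.
have M_lt : M < e by apply: bigmax_lt.
exists n, (fun i w => sp * g i w), (e - M); split.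
- by rewrite subr_gt0.
- move=> i; split=> [c p q|]; first by rewrite g_lin mulrDr mulrCA.
  case: (g_dual i) => _ [C gC]; exists (sp * C) => v.
  by rewrite normrM ger0_norm // -mulrA ler_wpM2l.
- move=> z [z_le1 z_near]; split=> // i.
  have -> : sp *: z - u = sp *: (z - w0) + (sp *: w0 - u).
    by rewrite scalerBr addrA subrK.
  rewrite g_lin; apply: le_lt_trans (ler_normD _ _) _.
  have := z_near i; have := le_bigmax 0 (fun i => `|g i (sp *: w0 - u)|) i.
  rewrite -/M; lra.
Qed.

(* Apply the definition to
   the slice above and rescale the point found by sp. *)
Lemma super_daugavet_far_point {n} {g : 'I_n -> X -> R} {x u : X} {sp e d a : R} :
  super_daugavet normX x -> (forall i, dual_elt normX (g i)) ->
  `|u| <= sp -> sp <= 1 -> 0 < e -> 0 < d -> a <= 1 ->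
  exists z, [/\ `|z| <= sp, (forall i, `|g i (z - u)| < e) &
                a + sp - d < `|a *: x - z|].
Proof.
move=> [x_sphere x_sd] g_dual u_le sp_le1 e_gt0 d_gt0 a_le1.
have sp_ge0 : 0 <= sp := le_trans (normr_ge0 u) u_le.
have [w0_ball w0_eq] := rescale_into_ball u_le.
set slice := [set w : X | `|w| <= 1 /\ forall i, `|g i (sp *: w - u)| < e].
have slice_open : rel_weakly_open normX slice :=
  slice_rel_weakly_open u sp_ge0 e_gt0 g_dual.
have slice_w0 : slice (sp^-1 *: u).
  split=> // i; rewrite w0_eq subrr linear_functional0 ?normr0 //.
  by case: (g_dual i).
have sup_eq2 := x_sd slice slice_open (ex_intro _ _ slice_w0).
have [_ [w [w_le1 w_slice] <-] w_far] :
    exists2 r, [set `|x - z| | z in slice] r & 2 - d < r.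
  by apply: sup_gt; [exists `|x - sp^-1 *: u|, (sp^-1 *: u) | rewrite sup_eq2; lra].
exists (sp *: w); split => //.
  by rewrite normrZ ger0_norm // -[leRHS]mulr1 ler_wpM2l.
have x_le1 : `|x| <= 1 by rewrite x_sphere.
have := dist_scaled_le x_le1 w_le1 a_le1 sp_le1; lra.
Qed.

End SuperDaugavetPoints.

Section DirectSum.
Context {R : realType} {X Y : normedModType R} {N : R -> R -> R}.
Context (N_abs : absolute_norm N) (N_nrm : normalized_norm N).
Local Notation normX := (fun v : X => `|v|).
Local Notation normY := (fun v : Y => `|v|).
Local Notation sumN := (sum_norm N : (X * Y)%type -> R).

Lemma linear_functional_pair {f : (X * Y)%type -> R} {v : X} {w : Y} :
  linear_functional f -> f (v, w) = f (v, 0) + f (0, w).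
Proof.
move=> f_lin; rewrite -[f (v, 0)]mul1r -f_lin; congr f.
by rewrite [RHS]surjective_pairing /= !scale1r addr0 add0r.
Qed.

(* Restricting a dual functional of X (+)_N Y to a factor gives a dual
   functional: since N is normalized, the inclusions of X and Y are isometric. *)
Lemma dual_elt_inl {f : (X * Y)%type -> R} :
  dual_elt sumN f -> dual_elt normX (fun v => f (v, 0)).
Proof.
move=> [f_lin [C f_le]]; split.
  by move=> c u v /=; rewrite -f_lin; congr f; rewrite [RHS]surjective_pairing /= scaler0 addr0.
by exists C => v; have := f_le (v, 0); rewrite /sum_norm /= normr0 N_axis_l // normr_id.
Qed.

Lemma dual_elt_inr {f : (X * Y)%type -> R} :
  dual_elt sumN f -> dual_elt normY (fun w => f (0, w)).
Proof.
move=> [f_lin [C f_le]]; split.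
  by move=> c u v /=; rewrite -f_lin; congr f; rewrite [RHS]surjective_pairing /= scaler0 addr0.
by exists C => v; have := f_le (0, v); rewrite /sum_norm /= normr0 N_axis_r // normr_id.
Qed.

Context {a b : R} {x : X} {y : Y}.
Context (a_ge0 : 0 <= a) (b_ge0 : 0 <= b) (N_ab : N a b = 1).

Lemma sum_norm_dist_le {z : (X * Y)%type} :
  `|x| = 1 -> `|y| = 1 -> sumN z <= 1 -> sumN ((a *: x, b *: y) - z) <= 2.
Proof.
rewrite /sum_norm /= => x_eq1 y_eq1 z_ball.
apply: le_trans (_ : N (a + `|z.1|) (b + `|z.2|) <= _).
  by apply: N_mono; rewrite ?normr_ge0 ?dist_scaled_unit_le.
by apply: le_trans (N_triangle N_abs _ _ _ _) _; rewrite N_ab; lra.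
Qed.

Context (N_a1b : N (a + 1) b = 2) (N_ab1 : N a (b + 1) = 2).

(* Starting from (u, v) in W, the
   two-dimensional target step gives sizes (s, t) dominating (|u|, |v|) with
   N (a + s) (b + t) = 2; the super Daugavet property in each factor then gives
   z1, z2 of norms at most s, t, weakly close to u, v, and almost at distance
   a + s, b + t from a x, b y. *)
Lemma sum_norm_dist_near {W : set (X * Y)} {d : R} :
  super_daugavet normX x -> super_daugavet normY y ->
  rel_weakly_open sumN W -> W !=set0 -> 0 < d ->
  exists2 z, W z & 2 - d <= sumN ((a *: x, b *: y) - z).
Proof.
move=> x_sd y_sd [W_ball W_open] [[u v] W_uv] d_gt0.
have [n [f [e [e_gt0 f_dual W_nbhd]]]] := W_open _ W_uv.
have [s [t [u_le v_le N_st N_ast]]] := N_target N_abs N_nrm a_ge0 b_ge0 N_ab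
  N_a1b N_ab1 (normr_ge0 u) (normr_ge0 v) (W_ball _ W_uv).
have [s_ge0 t_ge0] := (le_trans (normr_ge0 u) u_le, le_trans (normr_ge0 v) v_le).
have [s_le1 t_le1] : s <= 1 /\ t <= 1.
  by have [? ?] := N_coord_le N_abs N_nrm s_ge0 t_ge0; split; lra.
have [a_le1 b_le1] : a <= 1 /\ b <= 1.
  by have := N_coord_le N_abs N_nrm a_ge0 b_ge0; rewrite N_ab.
have e2_gt0 : 0 < e / 2 by rewrite divr_gt0.
have d2_gt0 : 0 < d / 2 by rewrite divr_gt0.
have [z1 [z1_le z1_near z1_far]] := super_daugavet_far_point x_sd
  (fun i => dual_elt_inl (f_dual i)) u_le s_le1 e2_gt0 d2_gt0 a_le1.
have [z2 [z2_le z2_near z2_far]] := super_daugavet_far_point y_sd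
  (fun i => dual_elt_inr (f_dual i)) v_le t_le1 e2_gt0 d2_gt0 b_le1.
exists (z1, z2).
  apply: W_nbhd; split; first exact: le_trans (N_mono N_abs _ z1_le _ z2_le) N_st.
  move=> i; rewrite (linear_functional_pair (f_dual i).1).
  by apply: le_lt_trans (ler_normD _ _) _; have := z1_near i; have := z2_near i; lra.
rewrite /sum_norm /=.
have := dist_scaled_unit_le z1 a_ge0 x_sd.1; have := dist_scaled_unit_le z2 b_ge0 y_sd.1.
have := N_lipschitz N_abs N_nrm (a + s) (b + t) `|a *: x - z1| `|b *: y - z2|.
move=> N_lip B_le A_le; rewrite !ger0_norm ?subr_ge0 in N_lip; lra.
Qed.

End DirectSum.

Lemma sup_eq_of_approx {R : realType} (S : set R) (c : R) :
  S !=set0 -> (forall r, S r -> r <= c) ->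
  (forall d, 0 < d -> exists2 r, S r & c - d <= r) -> sup S = c.
Proof.
move=> S_ne S_le S_approx; apply/eqP; rewrite eq_le (ge_sup S_ne S_le) /=.
apply/ler_addgt0Pr => d d_gt0; have [r Sr r_ge] := S_approx d d_gt0.
have : r <= sup S by apply: sup_upper_bound => //; split=> //; exists c.
lra.
Qed.

Theorem mainTheorem7 (R : realType) (X Y : completeNormedModType R)
  (N : R -> R -> R) (a b : R) (x : X) (y : Y) :
  absolute_norm N -> normalized_norm N -> positively_octahedral N ->
  0 <= a -> 0 <= b -> N a b = 1 -> N a (b + 1) = 2 -> N (a + 1) b = 2 ->
  super_daugavet (fun v : X => `|v|) x ->
  super_daugavet (fun v : Y => `|v|) y ->
  super_daugavet (sum_norm N : (X * Y)%type -> R) (a *: x, b *: y).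
Proof.
move=> N_abs N_nrm _ a_ge0 b_ge0 N_ab N_ab1 N_a1b x_sd y_sd.
have [x_eq1 y_eq1] : `|x| = 1 /\ `|y| = 1 := conj x_sd.1 y_sd.1.
split; first by rewrite /unit_sphere /sum_norm /= !normrZ x_eq1 y_eq1 !mulr1 !ger0_norm.
move=> W W_open [p Wp]; apply: sup_eq_of_approx.
- by exists (sum_norm N ((a *: x, b *: y) - p)), p.
- move=> _ [z Wz <-].
  exact: (sum_norm_dist_le N_abs a_ge0 b_ge0 N_ab x_eq1 y_eq1 (W_open.1 z Wz)).
- move=> d d_gt0.
  have [z Wz z_far] := sum_norm_dist_near N_abs N_nrm a_ge0 b_ge0 N_ab N_a1b N_ab1
    x_sd y_sd W_open (ex_intro _ p Wp) d_gt0.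
  by exists (sum_norm N ((a *: x, b *: y) - z)) => //; exists z.
Qed.
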